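(* Let $L>0$, $J\ge2$ and $\delta t>0$ with $\delta t/\delta x^2\le1/2$, and set $\eta=\max_{1\le\ell\le J-1}|1+\delta t\,\lambda_\ell|$. Then for all $n\ge1$, $\delta t\sum_{k=0}^{n-1}\eta^k\le 2L^2$.
   Context: $\delta x=L/(J-1)$, $\lambda_\ell=-\frac4{\delta x^2}\sin^2\big(\frac{\ell\pi}{2J}\big)$ for $0\le\ell\le J-1$. *)

From Stdlib Require Import Reals Lra Lia List.
Open Scope R_scope.

Definition dx (L : R) (J : nat) : R := L / INR (J - 1).

Definition lambda (L : R) (J l : nat) : R :=
  - (4 / (dx L J) ^ 2) * (sin (INR l * PI / (2 * INR J))) ^ 2.

(* eta = max_{1 <= l <= J-1} |1 + dt * lambda_l|.
   The list seq 1 (J-1) = [1; ...; J-1]; all entries are >= 0, so folding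
   Rmax with initial value 0 computes the maximum (list nonempty for J >= 2). *)
Definition eta (L dt : R) (J : nat) : R :=
  fold_right Rmax 0
    (map (fun l => Rabs (1 + dt * lambda L J l)) (seq 1 (J - 1))).

From Stdlib Require Import Reals.
From Stdlib Require Import Lra Lia List.
Open Scope R_scope.

(* With r := dt / dx^2 and s := sin (PI / (2 J)), the amplification factors are
   1 - 4 r sin^2 (l PI / (2 J)); their angles lie in [PI / (2 J), PI / 2 - PI / (2 J)],
   so sin^2 lies in [s^2, 1 - s^2] and r <= 1/2 gives eta <= 1 - 4 r s^2.  The
   geometric sum is then at most 1 / (4 r s^2), hence dt times it is at most
   dx^2 / (4 s^2) = L^2 / (4 ((J - 1) s)^2), and (J - 1) s >= 5/12 because
   sin x >= x - x^3/6 >= 5x/6 on [0, 1]. *)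

Lemma fold_right_Rmax_nonneg (l : list R) : 0 <= fold_right Rmax 0 l.
Proof.
  induction l as [|x l IH]; simpl; [lra|].
  eapply Rle_trans; [exact IH | apply Rmax_r].
Qed.

Lemma fold_right_Rmax_lub (l : list R) (B : R) :
  0 <= B -> (forall x, In x l -> x <= B) -> fold_right Rmax 0 l <= B.
Proof.
  induction l as [|x l IH]; simpl; intros HB Hl; [lra|].
  apply Rmax_lub; auto.
Qed.

Lemma sum_pow_le_inv (q c : R) (N : nat) :
  0 < c -> 0 <= q <= 1 - c -> sum_f_R0 (fun k => q ^ k) N <= / c.
Proof.
  intros Hc Hq.
  rewrite tech3 by lra.
  assert (0 <= q ^ S N) by (apply pow_le; lra).
  apply Rle_trans with (/ (1 - q)).
  - unfold Rdiv. rewrite <- (Rmult_1_l (/ (1 - q))) at 2.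
    apply Rmult_le_compat_r; [left; apply Rinv_0_lt_compat |]; lra.
  - apply Rinv_le_contravar; lra.
Qed.

Lemma sin_ge_linear (x : R) : 0 <= x <= 1 -> 5 / 6 * x <= sin x.
Proof.
  intros Hx.
  assert (HPI := PI2_1).
  destruct (sin_bound x 0) as [Hlb _]; try lra.
  eapply Rle_trans; [| exact Hlb].
  unfold sin_approx, sin_term; simpl; nra.
Qed.

Lemma Rabs_1_minus_4_sin2_le (r a theta : R) :
  0 <= r <= 1 / 2 -> 0 <= a -> a <= theta <= PI / 2 - a ->
  Rabs (1 - 4 * r * sin theta ^ 2) <= 1 - 4 * r * sin a ^ 2.
Proof.
  intros Hr Ha Htheta.
  assert (HPI := PI_RGT_0).
  assert (Hsa : 0 <= sin a) by (apply sin_ge_0; lra).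
  assert (Hlow : sin a <= sin theta) by (apply sin_incr_1; lra).
  assert (Hup : sin theta <= cos a).
  { rewrite <- sin_shift. apply sin_incr_1; lra. }
  assert (Hpyth := sin2_cos2 a). unfold Rsqr in Hpyth.
  assert (Hsq : sin a ^ 2 <= sin theta ^ 2 <= 1 - sin a ^ 2) by (split; nra).
  apply Rabs_le; split; nra.
Qed.

Lemma dx_pos (L : R) (J : nat) : 0 < L -> (2 <= J)%nat -> 0 < dx L J.
Proof.
  intros HL HJ. unfold dx.
  apply Rdiv_lt_0_compat; [lra | apply lt_0_INR; lia].
Qed.

Lemma dt_mul_lambda (L dt : R) (J l : nat) :
  dt * lambda L J l
  = - (4 * (dt / dx L J ^ 2)) * sin (INR l * PI / (2 * INR J)) ^ 2.
Proof. unfold lambda, Rdiv. ring. Qed.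

Lemma Rabs_amplification_le (L dt : R) (J l : nat) :
  (1 <= l <= J - 1)%nat -> 0 <= dt / dx L J ^ 2 <= 1 / 2 ->
  Rabs (1 + dt * lambda L J l)
  <= 1 - 4 * (dt / dx L J ^ 2) * sin (PI / (2 * INR J)) ^ 2.
Proof.
  intros Hl Hr.
  assert (HPI := PI_RGT_0).
  assert (HJ : 0 < INR J) by (apply lt_0_INR; lia).
  assert (Hl1 : 1 <= INR l) by (apply (le_INR 1); lia).
  assert (HlJ : INR l + 1 <= INR J) by (rewrite <- S_INR; apply le_INR; lia).
  set (a := PI / (2 * INR J)).
  assert (Ha : 0 < a) by (apply Rdiv_lt_0_compat; lra).
  assert (HaJ : INR J * a = PI / 2) by (unfold a; field; lra).
  assert (Htheta : INR l * PI / (2 * INR J) = INR l * a) by (unfold a, Rdiv; ring).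
  rewrite dt_mul_lambda, Htheta.
  replace (1 + - (4 * (dt / dx L J ^ 2)) * sin (INR l * a) ^ 2)
    with (1 - 4 * (dt / dx L J ^ 2) * sin (INR l * a) ^ 2) by ring.
  apply Rabs_1_minus_4_sin2_le; [exact Hr | lra | split; nra].
Qed.

Lemma eta_le (L dt : R) (J : nat) :
  (2 <= J)%nat -> 0 <= dt / dx L J ^ 2 <= 1 / 2 ->
  eta L dt J <= 1 - 4 * (dt / dx L J ^ 2) * sin (PI / (2 * INR J)) ^ 2.
Proof.
  intros HJ Hr. unfold eta.
  apply fold_right_Rmax_lub.
  - eapply Rle_trans; [apply Rabs_pos |].
    apply (Rabs_amplification_le L dt J 1); [lia | exact Hr].
  - intros x Hx.
    apply in_map_iff in Hx as [l [<- Hl]].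
    apply in_seq in Hl.
    apply Rabs_amplification_le; [lia | exact Hr].
Qed.

Lemma sin_first_angle_ge (J : nat) :
  (2 <= J)%nat -> 5 / 12 <= INR (J - 1) * sin (PI / (2 * INR J)).
Proof.
  intros HJ.
  assert (HPI := PI2_1). assert (HPI4 := PI_4).
  assert (HJ2 : 2 <= INR J) by (apply (le_INR 2); lia).
  assert (Hm : INR (J - 1) = INR J - 1) by (rewrite minus_INR by lia; reflexivity).
  set (a := PI / (2 * INR J)).
  assert (HaJ : INR J * a = PI / 2) by (unfold a; field; lra).
  assert (Ha : 0 < a) by (apply Rdiv_lt_0_compat; lra).
  assert (Ha4 : a <= PI / 4).
  { assert (0 <= (INR J - 2) * a) by (apply Rmult_le_pos; lra). nra. }
  assert (Hs := sin_ge_linear a ltac:(lra)).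
  rewrite Hm.
  apply Rle_trans with ((INR J - 1) * (5 / 6 * a)).
  { replace ((INR J - 1) * (5 / 6 * a)) with (5 / 6 * (INR J * a - a)) by ring.
    rewrite HaJ. lra. }
  apply Rmult_le_compat_l; lra.
Qed.

Lemma sin_first_angle_pos (J : nat) : (2 <= J)%nat -> 0 < sin (PI / (2 * INR J)).
Proof.
  intros HJ.
  assert (H := sin_first_angle_ge J HJ).
  destruct (Rle_or_lt (sin (PI / (2 * INR J))) 0) as [Hle | Hgt]; [| exact Hgt].
  assert (0 <= INR (J - 1) * - sin (PI / (2 * INR J)))
    by (apply Rmult_le_pos; [apply pos_INR | lra]).
  lra.
Qed.

Lemma dx_sq_div_sin_sq_le (L : R) (J : nat) :
  0 < L -> (2 <= J)%nat ->
  dx L J ^ 2 / (4 * sin (PI / (2 * INR J)) ^ 2) <= 2 * L ^ 2.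
Proof.
  intros HL HJ.
  assert (Hm : 1 <= INR (J - 1)) by (apply (le_INR 1); lia).
  assert (Hms := sin_first_angle_ge J HJ).
  assert (Hs := sin_first_angle_pos J HJ).
  set (s := sin (PI / (2 * INR J))) in *.
  set (m := INR (J - 1)) in *.
  replace (dx L J ^ 2 / (4 * s ^ 2)) with (L ^ 2 / (4 * (m * s) ^ 2))
    by (unfold dx; fold m; field; lra).
  apply Rle_trans with (L ^ 2 / (1 / 2)); [| lra].
  apply Rmult_le_compat_l; [nra |].
  apply Rinv_le_contravar; nra.
Qed.

(* sum_f_R0 f (n-1) = f 0 + ... + f (n-1), i.e. n terms. *)
Theorem proposition3p3 (L dt : R) (J : nat) :
  0 < L -> (2 <= J)%nat -> 0 < dt -> dt / (dx L J) ^ 2 <= 1 / 2 ->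
  forall n : nat, (1 <= n)%nat ->
    dt * sum_f_R0 (fun k => (eta L dt J) ^ k) (n - 1) <= 2 * L ^ 2.
Proof.
  intros HL HJ Hdt Hr n _.
  assert (Hdx := dx_pos L J HL HJ).
  assert (Hr0 : 0 < dt / dx L J ^ 2) by (apply Rdiv_lt_0_compat; [| apply pow_lt]; lra).
  assert (Hs := sin_first_angle_pos J HJ).
  set (c := 4 * (dt / dx L J ^ 2) * sin (PI / (2 * INR J)) ^ 2).
  assert (Hc : 0 < c)
    by (apply Rmult_lt_0_compat; [lra | apply pow_lt; exact Hs]).
  assert (Hsum : sum_f_R0 (fun k => eta L dt J ^ k) (n - 1) <= / c).
  { apply sum_pow_le_inv; [exact Hc | split].
    - apply fold_right_Rmax_nonneg.
    - apply eta_le; [exact HJ | lra]. }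
  apply Rle_trans with (dt * / c); [apply Rmult_le_compat_l; lra |].
  replace (dt * / c) with (dx L J ^ 2 / (4 * sin (PI / (2 * INR J)) ^ 2))
    by (unfold c; field; lra).
  apply dx_sq_div_sin_sq_le; assumption.
Qed.
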